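(* For every integer $n\ge 0$, the number of Retakh Dyck paths of semilength $n$ (equivalently, the number of Retakh plane trees with $n+1$ nodes) equals the Motzkin number $M_n$. Equivalently, if $T(z)=\sum_{\tau}z^{|\tau|}$ is the generating function of Retakh plane trees by number of nodes $|\tau|$, then $T(z)=zM(z)$, where $M(z)=\sum_{n\ge0}M_nz^n=\frac{1-z-\sqrt{1-2z-3z^2}}{2z^2}$ is the unique power series solution of $M=1+zM+z^2M^2$. Moreover, let $F(z)$ be the generating function, by number of nodes, of plane trees with at least two nodes in which every leaf lies at odd depth, and let $G(z)$ be the generating function, by number of nodes, of plane trees in which every leaf lies at even depth (the one-node tree is included, its root being a leaf at depth $0$). Then $F=\frac{zG}{1-G}$, $G=\frac{z}{1-F}$, and $F(z)=z^2M(z)$.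
   Context: A Dyck path of semilength $n$ is a lattice path from $(0,0)$ to $(2n,0)$ with up-steps $(1,1)$ and down-steps $(1,-1)$ that never goes below the $x$-axis. A peak is an up-step immediately followed by a down-step; its level is the height of the point between them. A Retakh Dyck path is a Dyck path all of whose peaks are at level $1$ or at an even level. Under the standard bijection between Dyck paths of semilength $n$ and plane (ordered rooted) trees with $n+1$ nodes, the peaks correspond to the non-root leaves and the level of a peak equals the depth of the leaf (the root has depth $0$). A Retakh plane tree is a plane tree in which every non-root leaf has depth $1$ or even depth; the one-node tree is included, corresponding to the empty path. $M_n$ denotes the $n$-th Motzkin number. *)

From mathcomp Require Import all_boot.
From Stdlib Require List.
Set Implicit Arguments. Unset Strict Implicit. Unset Printing Implicit Defensive.

(* ---------- Motzkin numbers: M_0 = 1, M_{n+1} = M_n + sum_{i+j=n-1} M_i M_j,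
   i.e. the coefficients of the unique power series with M = 1 + zM + z^2 M^2. *)
Fixpoint motzkin_list (n : nat) : seq nat :=
  (* returns [:: M_n; M_{n-1}; ...; M_0] *)
  match n with
  | 0 => [:: 1]
  | m.+1 =>
      let l := motzkin_list m in
      let Mi := fun i => nth 0 (rev l) i in
      (head 0 l + (if m is k.+1 then \sum_(i < k.+1) Mi i * Mi (k - i) else 0)) :: l
  end.
Definition motzkin (n : nat) : nat := head 0 (motzkin_list n).

(* ---------- Dyck paths: true = up-step (1,1), false = down-step (1,-1). *)
Fixpoint dyck_from (h : nat) (s : seq bool) : bool :=
  match s with
  | [::] => h == 0
  | true :: s' => dyck_from h.+1 s'
  | false :: s' => (0 < h) && dyck_from h.-1 s'
  end.
Definition dyck (s : seq bool) : bool := dyck_from 0 s.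

Fixpoint peaks_ok (p : nat -> bool) (h : nat) (s : seq bool) : bool :=
  match s with
  | [::] => true
  | true :: s' => (if s' is false :: _ then p h.+1 else true) && peaks_ok p h.+1 s'
  | false :: s' => peaks_ok p h.-1 s'
  end.

Definition retakh_level (d : nat) : bool := (d == 1) || ~~ odd d.

Definition retakh_path (s : seq bool) : bool := dyck s && peaks_ok retakh_level 0 s.

Definition num_retakh_paths (n : nat) : nat :=
  #|[pred t : (n.*2).-tuple bool | retakh_path t]|.

Inductive ptree : Type := Node : seq ptree -> ptree.

Fixpoint nodes (t : ptree) : nat :=
  let: Node ts := t in (sumn (map nodes ts)).+1.

Fixpoint leaves_ok (p : nat -> bool) (d : nat) (t : ptree) : bool :=
  match t with
  | Node [::] => p d
  | Node ts => all (leaves_ok p d.+1) ts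
  end.

(* Retakh plane tree: every non-root leaf has depth 1 or even depth.
   (The root is a leaf only in the one-node tree, at depth 0, which is even,
   so the one-node tree is included as required.) *)
Definition retakh_tree (t : ptree) : bool := leaves_ok retakh_level 0 t.

Definition F_tree (t : ptree) : bool := (2 <= nodes t) && leaves_ok odd 0 t.

Definition G_tree (t : ptree) : bool := leaves_ok (fun d => ~~ odd d) 0 t.

Definition count_trees (P : ptree -> bool) (n c : nat) : Prop :=
  exists s : seq ptree, List.NoDup s /\ (forall t, List.In t s <-> (nodes t = n /\ P t))
                         /\ length s = c.

(* Let F and G count trees with all leaves at odd, resp. even, depth.  Moving
   the root one level down swaps the two conditions, whence G = z/(1-F) and
   F = zG/(1-G), i.e. G = z + FG and F = zG + FG.  Eliminating G gives
   F = z^2 + zF + F^2, whose unique solution is F = z^2 M.  In a Retakh tree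
   each subtree of the root is a single leaf at depth 1 or a tree whose leaves
   lie at even depth >= 2; these are counted by H = z + F = z + z^2 M, so the
   Retakh trees with n+1 nodes number [z^n] 1/(1-H) = M_n because M = 1 + H M.
   Finally the usual encoding of a plane tree as a Dyck path sends leaves to
   peaks and depths to levels; it is a bijection from Retakh trees with n+1
   nodes onto Retakh paths of semilength n. *)

From HB Require Import structures.
From mathcomp Require Import all_boot zify.
Set Implicit Arguments. Unset Strict Implicit. Unset Printing Implicit Defensive.

Section PtreeInduction.
Variables (P : ptree -> Prop) (Q : seq ptree -> Prop).
Hypotheses (Q_nil : Q [::]) (Q_cons : forall t ts, P t -> Q ts -> Q (t :: ts))
  (P_Node : forall ts, Q ts -> P (Node ts)).

Fixpoint ptree_forest_ind (t : ptree) : P t :=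
  let: Node ts := t in P_Node
    ((fix forest (ts : seq ptree) : Q ts :=
       match ts with
       | [::] => Q_nil
       | t :: ts' => Q_cons (ptree_forest_ind t) (forest ts')
       end) ts).

Lemma forest_ind ts : Q ts.
Proof. by elim: ts => // t ts; apply: Q_cons (ptree_forest_ind t). Qed.
End PtreeInduction.

(* Plane trees embed into [GenTree.tree unit], which makes [ptree] a countable
   type; its decidable equality is needed to speak of duplicate-free lists. *)
Fixpoint ptree_to_gentree (t : ptree) : GenTree.tree unit :=
  let: Node ts := t in GenTree.Node 0 (map ptree_to_gentree ts).

Fixpoint gentree_to_ptree (g : GenTree.tree unit) : ptree :=
  match g with
  | GenTree.Leaf _ => Node [::]
  | GenTree.Node _ gs => Node (map gentree_to_ptree gs)
  end.

Lemma ptree_to_gentreeK : cancel ptree_to_gentree gentree_to_ptree.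
Proof.
apply: (@ptree_forest_ind _
  (fun ts => map gentree_to_ptree (map ptree_to_gentree ts) = ts)) => //=.
- by move=> t ts -> ->.
- by move=> ts ->.
Qed.

HB.instance Definition _ := Countable.copy ptree (can_type ptree_to_gentreeK).

Lemma nodes_gt0 t : 0 < nodes t.
Proof. by case: t. Qed.

Lemma uniq_NoDup (T : eqType) (s : seq T) : uniq s -> List.NoDup s.
Proof.
elim: s => [|x s IH] /=; first by constructor.
case/andP=> x_notin_s s_uniq; constructor; last exact: IH.
move=> x_in_s; case/negP: x_notin_s; elim: s x_in_s {IH s_uniq} => //= y s IH.
by case=> [->|/IH]; rewrite inE ?eqxx // => ->; rewrite orbT.
Qed.

Lemma In_mem (T : eqType) (s : seq T) x : List.In x s <-> x \in s.
Proof.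
elim: s => [|y s IH] //=; rewrite inE; split.
  by case=> [->|/IH ->]; rewrite ?eqxx ?orbT.
by case/orP=> [/eqP->|/IH]; [left|right].
Qed.

Lemma count_trees_seq (P : ptree -> bool) n (s : seq ptree) :
  uniq s -> (forall t, (t \in s) = (nodes t == n) && P t) -> count_trees P n (size s).
Proof.
move=> s_uniq mem_s; exists s; split; first exact: uniq_NoDup.
split=> // t; rewrite In_mem mem_s.
by split=> [/andP[/eqP]|[-> ->]] //; rewrite eqxx.
Qed.

Lemma uniq_size_eq (T : eqType) (s1 s2 : seq T) :
  uniq s1 -> uniq s2 -> s1 =i s2 -> size s1 = size s2.
Proof. by move=> u1 u2 e; apply/perm_size/uniq_perm. Qed.

Definition conv (a b : nat -> nat) (n : nat) : nat := \sum_(k < n.+1) a k * b (n - k).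
Definition delta (i n : nat) : nat := n == i.
Definition shift (a : nat -> nat) (n : nat) : nat := if n is m.+1 then a m else 0.

Lemma convC a b n : conv a b n = conv b a n.
Proof.
rewrite /conv (reindex_inj rev_ord_inj) /=; apply: eq_bigr => k _.
by rewrite mulnC subSS subKn // -ltnS.
Qed.

Lemma eq_conv a1 a2 b1 b2 n :
  (forall k, k <= n -> a1 k * b1 (n - k) = a2 k * b2 (n - k)) ->
  conv a1 b1 n = conv a2 b2 n.
Proof. by move=> e; apply: eq_bigr => k _; apply: e; rewrite -ltnS. Qed.

Lemma convDl a1 a2 b n : conv (fun k => a1 k + a2 k) b n = conv a1 b n + conv a2 b n.
Proof. by rewrite /conv -big_split; apply: eq_bigr => k _; rewrite mulnDl. Qed.

Lemma convDr a b1 b2 n : conv a (fun k => b1 k + b2 k) n = conv a b1 n + conv a b2 n.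
Proof. by rewrite /conv -big_split; apply: eq_bigr => k _; rewrite mulnDr. Qed.

Lemma conv_shiftl a b n : conv (shift a) b n = shift (conv a b) n.
Proof.
rewrite /conv big_ord_recl /= mul0n add0n.
case: n => [|n] /=; first by rewrite big_ord0.
by apply: eq_bigr => k _; rewrite subSS.
Qed.

Lemma conv_shiftr a b n : conv a (shift b) n = shift (conv a b) n.
Proof. by rewrite convC conv_shiftl; case: n => //= n; rewrite convC. Qed.

Lemma conv_delta0 a n : conv a (delta 0) n = a n.
Proof.
by rewrite convC /conv big_ord_recl subn0 mul1n big1 ?addn0.
Qed.

Lemma conv_delta1 a n : conv (delta 1) a n = shift a n.
Proof.
case: n => [|n]; first by rewrite /conv big_ord_recl big_ord0.
by rewrite /conv !big_ord_recl /= mul0n mul1n subn1 big1 ?addn0.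
Qed.

Lemma conv_lastS a b n : conv a b n.+1 = conv a (fun j => b j.+1) n + a n.+1 * b 0.
Proof.
rewrite /conv big_ord_recr subnn /=; congr addn; apply: eq_bigr => k _.
by rewrite subSn // -ltnS.
Qed.

Lemma conv0 a b : a 0 = 0 -> conv a b 0 = 0.
Proof. by move=> a0; rewrite /conv big_ord_recl big_ord0 a0. Qed.

Lemma conv1 a b : a 0 = 0 -> b 0 = 0 -> conv a b 1 = 0.
Proof.
by move=> a0 b0; rewrite /conv !big_ord_recl big_ord0 a0 /= b0 muln0.
Qed.

Lemma conv_fixpoint_unique a c s1 s2 : a 0 = 0 ->
  (forall n, s1 n = c n + conv a s1 n) -> (forall n, s2 n = c n + conv a s2 n) ->
  s1 =1 s2.
Proof.
move=> a0 eq1 eq2 n; elim: n {-2}n (leqnn n) => [|N IH] n.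
  by rewrite leqn0 => /eqP->; rewrite eq1 eq2 !conv0.
rewrite leq_eqVlt => /orP[/eqP->|]; last by rewrite ltnS; apply: IH.
rewrite eq1 eq2; congr addn; apply: eq_conv => -[|k] kN; first by rewrite a0.
by rewrite IH // leq_subLR; lia.
Qed.

(* Coefficients of 1/(1 - A(z)) for a_0 = 0, computed by
   s_0 = 1, s_(m+1) = sum_(k <= m) a_(k+1) s_(m-k); the fuel only bounds the
   recursion and is irrelevant as soon as it is at least m. *)
Fixpoint forest_series_fuel (fuel : nat) (a : nat -> nat) (m : nat) : nat :=
  match m with
  | 0 => 1
  | m'.+1 =>
      if fuel is fuel'.+1 then \sum_(k < m'.+1) a k.+1 * forest_series_fuel fuel' a (m' - k)
      else 0
  end.

Definition forest_series (a : nat -> nat) (m : nat) : nat := forest_series_fuel m a m.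

Lemma forest_series_fuel_enough fuel1 fuel2 a m : m <= fuel1 -> m <= fuel2 ->
  forest_series_fuel fuel1 a m = forest_series_fuel fuel2 a m.
Proof.
elim: fuel1 fuel2 m => [|f1 IH] [|f2] [|m] // le1 le2 /=.
by apply: eq_bigr => k _; rewrite (IH f2 (m - k)) //; lia.
Qed.

Lemma eq_forest_series_fuel fuel a b m : (forall k, 0 < k <= m -> a k = b k) ->
  forest_series_fuel fuel a m = forest_series_fuel fuel b m.
Proof.
elim: fuel m => [|fuel IH] [|m] // eq_ab /=.
apply: eq_bigr => k _; rewrite eq_ab; last by have := ltn_ord k; lia.
by congr muln; apply: IH => j j_le; apply: eq_ab; lia.
Qed.

Lemma eq_forest_series a b m : (forall k, 0 < k <= m -> a k = b k) ->
  forest_series a m = forest_series b m.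
Proof. exact: eq_forest_series_fuel. Qed.

Lemma forest_seriesE a m : a 0 = 0 -> forest_series a m = delta 0 m + conv a (forest_series a) m.
Proof.
move=> a0; case: m => [|m]; first by rewrite conv0.
rewrite /forest_series /conv big_ord_recl a0 /= add0n; apply: eq_bigr => k _.
by rewrite subSS; congr muln; apply: forest_series_fuel_enough; lia.
Qed.

(* [forests fuel tr m] lists the sequences of objects of total weight m whose
   objects of weight k are taken from [tr k] (exactly those once m <= fuel). *)
Fixpoint forests (T : Type) (fuel : nat) (tr : nat -> seq T) (m : nat) : seq (seq T) :=
  match m, fuel with
  | 0, _ => [:: [::]]
  | _, 0 => [::]
  | _, fuel'.+1 =>
      flatten [seq [seq t :: x | t <- tr k, x <- forests fuel' tr (m - k)] | k <- iota 1 m]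
  end.

Lemma forestsS (T : Type) fuel (tr : nat -> seq T) m : forests fuel.+1 tr m.+1 =
  flatten [seq [seq t :: x | t <- tr k, x <- forests fuel tr (m.+1 - k)] | k <- iota 1 m.+1].
Proof. by []. Qed.

Lemma sumn_iota (F : nat -> nat) m n : sumn (map F (iota m n)) = \sum_(k < n) F (m + k).
Proof.
elim: n m => [|n IH] m; first by rewrite big_ord0.
by rewrite /= IH big_ord_recl addn0; congr addn; apply: eq_bigr => k _; rewrite addSnnS.
Qed.

Lemma size_forests (T : Type) fuel (tr : nat -> seq T) m :
  size (forests fuel tr m) = forest_series_fuel fuel (fun k => size (tr k)) m.
Proof.
elim: fuel m => [|fuel IH] [|m] //.
rewrite forestsS size_flatten /shape -map_comp sumn_iota /=.
by apply: eq_bigr => k _; rewrite size_allpairs IH add1n subSS.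
Qed.

Lemma uniq_flatten_disjoint (S T : eqType) (F : S -> seq T) (s : seq S) :
  uniq s -> (forall k, uniq (F k)) ->
  (forall k k' x, x \in F k -> x \in F k' -> k = k') ->
  uniq (flatten (map F s)).
Proof.
move=> s_uniq F_uniq F_disj; elim: s s_uniq => //= k s IH /andP[k_notin s_uniq].
rewrite cat_uniq F_uniq IH // andbT; apply/hasPn => x /flatten_mapP[k' k'_in x_in].
by apply/negP => x_in'; move: k_notin; rewrite (F_disj _ _ _ x_in' x_in) k'_in.
Qed.

Section Forests.
Variables (T : eqType) (weight : T -> nat) (tr : nat -> seq T).
Hypothesis weight_gt0 : forall t, 0 < weight t.
Hypothesis weight_tr : forall k t, t \in tr k -> weight t = k.

Let drawn (x : seq T) := all (fun t => t \in tr (weight t)) x.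

Lemma forests_sound fuel m x : x \in forests fuel tr m ->
  drawn x && (sumn (map weight x) == m).
Proof.
elim: fuel m x => [|fuel IH] [|m] x //; rewrite ?forestsS ?inE; try by move/eqP->.
case/flatten_mapP=> k; rewrite mem_iota => /andP[k_ge1 k_le].
case/allpairsP=> -[t y] /= [t_in /IH /andP[y_drawn /eqP y_sum] ->] /=.
by rewrite (weight_tr t_in) t_in y_drawn y_sum /=; apply/eqP; lia.
Qed.

Lemma forests_complete fuel m x : m <= fuel ->
  drawn x -> sumn (map weight x) = m -> x \in forests fuel tr m.
Proof.
have sum_gt0 t y : 0 < sumn (map weight (t :: y)) by rewrite /= ltn_addr.
elim: fuel m x => [|fuel IH] [|m] [|t x] // m_le; rewrite ?mem_seq1 //;
  try by move=> _ sum_0; move: (sum_gt0 t x); rewrite sum_0.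
case/andP=> t_in x_drawn sum_tx; rewrite forestsS.
apply/flatten_mapP; exists (weight t).
  by rewrite mem_iota weight_gt0 -sum_tx /= leq_addr.
apply: allpairs_f => //; apply: IH => //; move: sum_tx (weight_gt0 t) => /=; lia.
Qed.

Lemma forests_uniq fuel m : (forall k, uniq (tr k)) -> uniq (forests fuel tr m).
Proof.
move=> tr_uniq; elim: fuel m => [|fuel IH] [|m] //; rewrite forestsS.
apply: uniq_flatten_disjoint; first exact: iota_uniq.
- by move=> k; apply: allpairs_uniq => // -[t x] [t' x'] _ _ /= [-> ->].
- move=> k k' y /allpairsP[[t x] /= [t_in _ ->]] /allpairsP[[t' x'] /= [t'_in _ [e _]]].
  by rewrite -(weight_tr t_in) -(weight_tr t'_in) e.
Qed.
End Forests.

(* [leaf_trees p fuel d n]: plane trees with n nodes, root at depth d and all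
   leaves at depths satisfying p (exactly those once n <= fuel); a tree with
   n+2 nodes is a root above a nonempty forest with n+1 nodes. *)
Fixpoint leaf_trees (p : nat -> bool) (fuel d n : nat) : seq ptree :=
  match fuel, n with
  | 0, _ | _, 0 => [::]
  | _.+1, 1 => if p d then [:: Node [::]] else [::]
  | fuel'.+1, n'.+1 => [seq Node x | x <- forests n' (leaf_trees p fuel' d.+1) n']
  end.

Lemma leaf_treesSS p fuel d n : leaf_trees p fuel.+1 d n.+2 =
  [seq Node x | x <- forests n.+1 (leaf_trees p fuel d.+1) n.+1].
Proof. by []. Qed.

Lemma leaves_ok_cons p d c cs :
  leaves_ok p d (Node (c :: cs)) = all (leaves_ok p d.+1) (c :: cs).
Proof. by []. Qed.

Lemma leaf_trees_sound p fuel d n t :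
  t \in leaf_trees p fuel d n -> (nodes t == n) && leaves_ok p d t.
Proof.
elim: fuel d n t => [|fuel IH] d [|[|n]] t //.
  by rewrite /=; case: ifP => // pd; rewrite mem_seq1 => /eqP->; rewrite /= pd.
rewrite leaf_treesSS => /mapP[x x_in ->].
have nodes_tr k c : c \in leaf_trees p fuel d.+1 k -> nodes c = k.
  by move/IH/andP=> [/eqP].
have /andP[x_drawn /eqP x_nodes] := forests_sound nodes_tr x_in.
rewrite /= x_nodes eqxx /=; case: x x_drawn x_nodes {x_in} => [|c x] // x_drawn _.
apply/allP => c' c'_in.
by have /IH/andP[] := allP x_drawn c' c'_in.
Qed.

Lemma nodes_le_sumn (x : seq ptree) c : c \in x -> nodes c <= sumn (map nodes x).
Proof.
elim: x => //= c' x IH; rewrite inE => /orP[/eqP->|/IH]; first exact: leq_addr.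
by move/leq_trans; apply; apply: leq_addl.
Qed.

Lemma leaf_trees_complete p fuel d n t : n <= fuel -> nodes t = n -> leaves_ok p d t ->
  t \in leaf_trees p fuel d n.
Proof.
elim: fuel d n t => [|fuel IH] d n t.
  by rewrite leqn0 => /eqP->; have := nodes_gt0 t; lia.
case: t => -[|c x] n_le nodes_t; subst n; first by move=> /= ->; rewrite mem_seq1.
have [k nodes_k] : exists k, sumn (map nodes (c :: x)) = k.+1.
  by exists (nodes c + sumn (map nodes x)).-1; have := nodes_gt0 c; rewrite /=; lia.
have nodes_Node : nodes (Node (c :: x)) = k.+2 by rewrite -nodes_k.
rewrite nodes_Node in n_le *.
rewrite leaves_ok_cons leaf_treesSS => /allP all_ok; apply: map_f.
have nodes_tr k' c' : c' \in leaf_trees p fuel d.+1 k' -> nodes c' = k'.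
  by move/leaf_trees_sound/andP=> [/eqP].
apply: (forests_complete nodes_gt0) => //; apply/allP => c' c'_in.
apply: IH => //; last exact: all_ok.
by move: (nodes_le_sumn c'_in) n_le; rewrite nodes_k; lia.
Qed.

Lemma leaf_trees_uniq p fuel d n : uniq (leaf_trees p fuel d n).
Proof.
elim: fuel d n => [|fuel IH] d [|[|n]] //; first by rewrite /=; case: ifP.
rewrite leaf_treesSS map_inj_uniq; last by move=> ? ? [].
by apply: (@forests_uniq _ nodes) => // k c /leaf_trees_sound/andP[/eqP].
Qed.

Lemma mem_leaf_trees p fuel d n t : n <= fuel ->
  (t \in leaf_trees p fuel d n) = (nodes t == n) && leaves_ok p d t.
Proof.
move=> n_le; apply/idP/idP; first exact: leaf_trees_sound.
by case/andP=> /eqP t_n t_ok; apply: leaf_trees_complete.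
Qed.

Definition trees_with (p : nat -> bool) (d n : nat) : seq ptree := leaf_trees p n d n.
Definition num_trees (p : nat -> bool) (d n : nat) : nat := size (trees_with p d n).

Lemma mem_trees_with p d n t : (t \in trees_with p d n) = (nodes t == n) && leaves_ok p d t.
Proof. exact: mem_leaf_trees. Qed.

Lemma size_leaf_trees p fuel d n : n <= fuel -> size (leaf_trees p fuel d n) = num_trees p d n.
Proof.
move=> n_le; apply: uniq_size_eq; rewrite ?leaf_trees_uniq // => t.
by rewrite mem_trees_with mem_leaf_trees.
Qed.

Lemma eq_num_trees p q d e n : (forall t, leaves_ok p d t = leaves_ok q e t) ->
  num_trees p d n = num_trees q e n.
Proof.
move=> eq_ok; apply: uniq_size_eq; rewrite ?leaf_trees_uniq // => t.
by rewrite !mem_trees_with eq_ok.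
Qed.

Lemma num_trees1 p d : num_trees p d 1 = p d.
Proof. by rewrite /num_trees /trees_with /=; case: (p d). Qed.

(* Removing the root: t_{p,d}(n+2) = [z^(n+1)] 1/(1 - T_{p,d+1}(z)). *)
Lemma num_treesSS p d n : num_trees p d n.+2 = forest_series (num_trees p d.+1) n.+1.
Proof.
rewrite /num_trees /trees_with leaf_treesSS size_map size_forests.
by apply: eq_forest_series_fuel => k k_le; apply: size_leaf_trees; lia.
Qed.

Lemma leaves_ok_shift p q : (forall x, p x.+1 = q x) ->
  forall d t, leaves_ok p d.+1 t = leaves_ok q d t.
Proof.
move=> pq d t; move: t d; apply: (@ptree_forest_ind _
  (fun ts => forall d, all (leaves_ok p d.+1) ts = all (leaves_ok q d) ts)) => //=.
- by move=> t ts eq_t eq_ts d; rewrite eq_t eq_ts.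
- by move=> [|c cs] eq_cs d; rewrite ?pq // !leaves_ok_cons eq_cs.
Qed.

(* Coefficients of F (all leaves at odd depth) and G (all at even depth); the
   one-node tree is a leaf at depth 0, so it counts for G but not for F. *)
Definition f_count (n : nat) : nat := num_trees odd 0 n.
Definition g_count (n : nat) : nat := num_trees (fun d => ~~ odd d) 0 n.

(* One level down, odd depths become even ones and vice versa. *)
Lemma num_trees_odd1 n : num_trees odd 1 n = g_count n.
Proof. by apply: eq_num_trees => t; apply: leaves_ok_shift. Qed.

Lemma num_trees_even1 n : num_trees (fun d => ~~ odd d) 1 n = f_count n.
Proof. by apply: eq_num_trees => t; apply: leaves_ok_shift => x /=; rewrite negbK. Qed.

Lemma f_count0 : f_count 0 = 0. Proof. by []. Qed.
Lemma g_count0 : g_count 0 = 0. Proof. by []. Qed.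

Lemma g_countS n : g_count n.+1 = forest_series f_count n.
Proof.
case: n => [|n]; first by rewrite /g_count num_trees1.
by rewrite /g_count num_treesSS; apply: eq_forest_series => k _; rewrite num_trees_even1.
Qed.

Lemma forest_series_g_count n : forest_series g_count n = f_count n.+1 + delta 0 n.
Proof.
case: n => [|n]; first by rewrite /f_count num_trees1.
rewrite /f_count num_treesSS addn0; apply: eq_forest_series => k _.
by rewrite num_trees_odd1.
Qed.

Lemma g_count_eq n : g_count n = delta 1 n + conv f_count g_count n.
Proof.
case: n => [|n]; first by rewrite conv0.
rewrite g_countS forest_seriesE // conv_lastS g_count0 muln0 addn0.
by congr addn; apply: eq_conv => k _; rewrite g_countS.
Qed.

Lemma f_count_eq n : f_count n = shift g_count n + conv f_count g_count n.
Proof.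
case: n => [|[|n]]; first by rewrite conv0.
  by rewrite /f_count num_trees1 conv1.
rewrite (convC f_count) conv_lastS f_count0 muln0 addn0 /=.
have -> : f_count n.+2 = forest_series g_count n.+1 by rewrite forest_series_g_count addn0.
rewrite forest_seriesE // (@eq_conv _ g_count _ (fun j => f_count j.+1 + delta 0 j)).
  by rewrite add0n convDr conv_delta0 addnC.
by move=> k _; rewrite forest_series_g_count.
Qed.

Section QuadraticSystem.
Variables f g : nat -> nat.
Hypotheses (f0 : f 0 = 0)
  (f_eq : forall n, f n = shift g n + conv f g n)
  (g_eq : forall n, g n = delta 1 n + conv f g n).

Lemma quadratic_of_system n : f n = delta 2 n + shift f n + conv f f n.
Proof.
have g_shift k : g k + shift g k = f k + delta 1 k by rewrite f_eq g_eq; lia.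
have ff_eq : conv f f n + shift f n = conv f g n + shift (conv f g) n.
  rewrite -conv_delta1 (convC (delta 1)) -convDr -conv_shiftr -convDr.
  by apply: eq_conv => k _; rewrite g_shift.
have f_eq' : f n = delta 2 n + shift (conv f g) n + conv f g n.
  rewrite f_eq; case: n {ff_eq} => [|n] /=; first by rewrite conv0.
  by rewrite g_eq -[delta 1 n]/(delta 2 n.+1); lia.
lia.
Qed.
End QuadraticSystem.

Lemma quadratic_unique c s1 s2 : s1 0 = 0 -> s2 0 = 0 ->
  (forall n, s1 n = c n + shift s1 n + conv s1 s1 n) ->
  (forall n, s2 n = c n + shift s2 n + conv s2 s2 n) -> s1 =1 s2.
Proof.
move=> s1_0 s2_0 eq1 eq2 n; elim: n {-2}n (leqnn n) => [|N IH] n.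
  by rewrite leqn0 => /eqP->; rewrite s1_0.
rewrite leq_eqVlt => /orP[/eqP->|]; last by rewrite ltnS; apply: IH.
rewrite eq1 eq2; congr (_ + _ + _); first by apply: IH.
apply: eq_conv => k; rewrite leq_eqVlt => /orP[/eqP->|k_lt].
  by rewrite subnn s1_0 s2_0 !muln0.
case: k k_lt => [|k] k_lt; first by rewrite s1_0 s2_0.
by rewrite !IH //; lia.
Qed.

Lemma motzkin_listE m : motzkin_list m = rev (mkseq motzkin m.+1).
Proof.
elim: m => [|m IH] //.
by rewrite mkseqS rev_rcons -IH.
Qed.

Definition z2motzkin : nat -> nat := shift (shift motzkin).

Lemma conv_z2motzkin b n : conv z2motzkin b n.+2 = conv motzkin b n.
Proof. by rewrite conv_shiftl /= conv_shiftl. Qed.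

Lemma motzkinS m : motzkin m.+1 = motzkin m + conv z2motzkin motzkin m.+1.
Proof.
rewrite {1}/motzkin /=; congr addn; case: m => [|m]; first by rewrite conv_shiftl /= conv0.
rewrite conv_z2motzkin; apply: eq_bigr => k _.
by rewrite motzkin_listE revK !nth_mkseq //; have := ltn_ord k; lia.
Qed.

Lemma z2motzkin_quadratic n :
  z2motzkin n = delta 2 n + shift z2motzkin n + conv z2motzkin z2motzkin n.
Proof.
case: n => [|[|n]]; [by rewrite conv0 | by rewrite conv1 |].
rewrite conv_z2motzkin convC; case: n => [|n]; first by rewrite conv0.
exact: motzkinS.
Qed.

Lemma motzkin_fixpoint n :
  motzkin n = delta 0 n + conv (fun k => delta 1 k + z2motzkin k) motzkin n.
Proof.
case: n => [|n]; first by rewrite conv0.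
by rewrite convDl conv_delta1 -motzkinS.
Qed.

Lemma f_count_motzkin n : f_count n = z2motzkin n.
Proof.
apply: (quadratic_unique (c := delta 2)) => // m; last exact: z2motzkin_quadratic.
exact: (quadratic_of_system f_count0 f_count_eq g_count_eq).
Qed.

Definition retakh_count (n : nat) : nat := num_trees retakh_level 0 n.

(* Subtrees of the root of a Retakh tree, rooted at depth 1: a leaf at
   depth 1, or a tree whose leaves are at even depth, counted by z + F. *)
Lemma retakh_subtree_count k : num_trees retakh_level 1 k = delta 1 k + z2motzkin k.
Proof.
case: k => [|[|k]]; [by [] | by rewrite num_trees1 |].
rewrite num_treesSS -f_count_motzkin /f_count num_treesSS.
apply: eq_forest_series => j _; rewrite num_trees_odd1; apply: eq_num_trees => t.
rewrite (@leaves_ok_shift _ (fun x => retakh_level x.+1)) //.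
by apply: leaves_ok_shift => x; rewrite /retakh_level /= negbK.
Qed.

Lemma retakh_countS n : retakh_count n.+1 = motzkin n.
Proof.
have -> : retakh_count n.+1 = forest_series (num_trees retakh_level 1) n.
  by case: n => [|n]; rewrite /retakh_count ?num_trees1 ?num_treesSS.
apply: (conv_fixpoint_unique (c := delta 0)) (motzkin_fixpoint) n => //= m.
rewrite forest_seriesE //; congr addn; apply: eq_conv => k _.
by rewrite retakh_subtree_count.
Qed.

Fixpoint encode (t : ptree) : seq bool :=
  let: Node ts := t in flatten [seq true :: encode c ++ [:: false] | c <- ts].

Lemma encode_cons c cs :
  encode (Node (c :: cs)) = true :: encode c ++ false :: encode (Node cs).
Proof. by rewrite /= -catA. Qed.

Lemma encode_cons_cat c cs v :
  encode (Node (c :: cs)) ++ v = true :: encode c ++ false :: (encode (Node cs) ++ v).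
Proof. by rewrite encode_cons /= -catA. Qed.

Lemma dyck_encode ts h v : dyck_from h (encode (Node ts) ++ v) = dyck_from h v.
Proof.
pose P t := forall h v, dyck_from h (encode t ++ v) = dyck_from h v.
move: ts h v; apply: (@forest_ind P (fun ts => P (Node ts))) => // c cs dyck_c dyck_cs h v.
by rewrite encode_cons_cat /= dyck_c /= dyck_cs.
Qed.

Lemma encode_dyck t : dyck (encode t).
Proof. by case: t => ts; rewrite /dyck -[encode _]cats0 dyck_encode. Qed.

Lemma peaks_up_up p h w : peaks_ok p h (true :: true :: w) = peaks_ok p h.+1 (true :: w).
Proof. by []. Qed.

(* Peaks of the encoding are the leaves of the trees, at the same level. *)
Lemma peaks_encode p ts h v :
  peaks_ok p h (encode (Node ts) ++ v) = all (leaves_ok p h.+1) ts && peaks_ok p h v.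
Proof.
move: ts h v; apply: (@forest_ind
  (fun t => forall h v,
     peaks_ok p h (true :: encode t ++ false :: v) = leaves_ok p h.+1 t && peaks_ok p h v)
  (fun ts => forall h v,
     peaks_ok p h (encode (Node ts) ++ v) = all (leaves_ok p h.+1) ts && peaks_ok p h v)) => //.
- by move=> c cs peaks_c peaks_cs h v; rewrite encode_cons_cat peaks_c peaks_cs andbA.
- move=> [|c cs] peaks_cs h v //.
  by rewrite encode_cons_cat peaks_up_up -encode_cons_cat peaks_cs.
Qed.

Lemma size_encode t : size (encode t) = (nodes t).-1.*2.
Proof.
move: t; apply: (@ptree_forest_ind _
  (fun ts => size (encode (Node ts)) = (sumn (map nodes ts)).*2)) => //.
by move=> c cs size_c size_cs; rewrite encode_cons /= size_cat /= size_c size_cs;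
  have := nodes_gt0 c; lia.
Qed.

Lemma dyck_split k u1 u2 x y : dyck_from k u1 -> dyck_from k u2 ->
  u1 ++ false :: x = u2 ++ false :: y -> u1 = u2 /\ x = y.
Proof.
elim: u1 k u2 => [|b u1 IH] k [|b' u2] //=.
- by move=> /eqP-> _ [].
- by case: b' => /eqP-> //= _ [].
- by case: b => //= dyck_u1 /eqP k0 []; rewrite k0 in dyck_u1.
case: b; case: b' => //=.
- by move=> dyck1 dyck2 [] /(IH _ _ dyck1 dyck2) [-> ->].
- by move=> /andP[_ dyck1] /andP[_ dyck2] [] /(IH _ _ dyck1 dyck2) [-> ->].
Qed.

Lemma encode_inj : injective encode.
Proof.
apply: (@ptree_forest_ind _
  (fun ts => forall ts', encode (Node ts) = encode (Node ts') -> ts = ts')).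
- by case=> // c' cs'; rewrite encode_cons.
- move=> c cs inj_c inj_cs [|c' cs']; first by rewrite encode_cons.
  rewrite !encode_cons => -[] /(dyck_split (encode_dyck c) (encode_dyck c')) [enc_c enc_cs].
  by rewrite (inj_c c') // (inj_cs cs').
- by move=> ts inj_ts [ts'] /inj_ts ->.
Qed.

Lemma dyck_cat k h u v : dyck_from k u -> dyck_from (k + h) (u ++ v) = dyck_from h v.
Proof.
elim: u k => [|b u IH] k /=; first by move/eqP->.
case: b => /=; first by move/IH; rewrite addSn.
by case: k => // k /IH; rewrite addSn.
Qed.

Lemma first_return n w h : size w <= n -> dyck_from h.+1 w ->
  exists u v, [/\ w = u ++ false :: v, dyck u & dyck_from h v].
Proof.
elim: n w h => [|n IH] [|b w] h //= size_w.
case: b => /=; last by move=> dyck_w; exists [::], w.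
case/IH=> [|u1 [v1 [w_eq dyck_u1 dyck_v1]]]; first by lia.
have [|u2 [v2 [v1_eq dyck_u2 dyck_v2]]] := IH v1 h _ dyck_v1.
  by move: size_w; rewrite w_eq size_cat /=; lia.
exists (true :: u1 ++ false :: u2), v2; split => //; first by rewrite w_eq v1_eq /= -catA.
by rewrite /dyck /= -[1]add0n dyck_cat.
Qed.

Lemma dyck_encode_surj s : dyck s -> exists ts, s = encode (Node ts).
Proof.
elim: {s}(size s) {-2}s (leqnn (size s)) => [|n IH] [|[] s] //= size_s; try by exists [::].
case/(first_return (leqnn _)) => u [v [s_eq dyck_u dyck_v]].
rewrite s_eq size_cat /= in size_s *.
have [cu ->] := IH u ltac:(lia) dyck_u.
have [cv ->] := IH v ltac:(lia) dyck_v.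
by exists (Node cu :: cv); rewrite -[RHS]/(encode (Node (Node cu :: cv))) encode_cons.
Qed.

Lemma retakh_path_encode ts : retakh_path (encode (Node ts)) = retakh_tree (Node ts).
Proof.
rewrite /retakh_path /dyck -[encode _]cats0 dyck_encode peaks_encode andbT.
by case: ts.
Qed.

Lemma num_retakh_paths_trees n : num_retakh_paths n = retakh_count n.+1.
Proof.
rewrite /num_retakh_paths cardE -(size_map val) /retakh_count /num_trees -(size_map encode).
apply: uniq_size_eq.
- by rewrite map_inj_uniq ?enum_uniq //; apply: val_inj.
- by rewrite map_inj_uniq ?leaf_trees_uniq //; apply: encode_inj.
move=> s; apply/mapP/mapP => [[w] | [t]].
  rewrite mem_enum inE => retakh_w ->.
  have [ts enc_ts] := dyck_encode_surj (proj1 (andP retakh_w)).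
  exists (Node ts) => //; rewrite mem_trees_with -/(retakh_tree _).
  rewrite -retakh_path_encode -enc_ts retakh_w andbT.
  move: (size_tuple w); rewrite enc_ts size_encode => /(congr1 half).
  by rewrite !doubleK /= => ->.
case: t => ts; rewrite mem_trees_with -/(retakh_tree _) => /andP[/eqP nodes_ts retakh_ts] ->.
have size_ts : size (encode (Node ts)) == n.*2 by rewrite size_encode nodes_ts.
by exists (Tuple size_ts); rewrite // mem_enum inE retakh_path_encode.
Qed.

Lemma count_trees_with (P : ptree -> bool) p n : (forall t, P t = leaves_ok p 0 t) ->
  count_trees P n (num_trees p 0 n).
Proof.
move=> P_ok; apply: count_trees_seq => [|t]; first exact: leaf_trees_uniq.
by rewrite mem_trees_with P_ok.
Qed.

Lemma F_treeE t : F_tree t = leaves_ok odd 0 t.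
Proof.
case: t => -[|c cs] //; rewrite /F_tree /=.
by have := nodes_gt0 c; case: (nodes c).
Qed.

Theorem mainTheorem1 :
  (forall n : nat, num_retakh_paths n = motzkin n) /\
  count_trees retakh_tree 0 0 /\
  (forall n : nat, count_trees retakh_tree n.+1 (motzkin n)) /\
  (exists f g : nat -> nat,
     (forall n, count_trees F_tree n (f n)) /\
     (forall n, count_trees G_tree n (g n)) /\
     (forall n, f n = (if n is m.+1 then g m else 0)
                      + \sum_(k < n.+1) f k * g (n - k)) /\
     (forall n, g n = (n == 1) + \sum_(k < n.+1) f k * g (n - k)) /\
     (forall n, f n = if n is m.+2 then motzkin m else 0)).
Proof.
split; first by move=> n; rewrite num_retakh_paths_trees retakh_countS.
split; first exact: (count_trees_with 0 (fun _ => erefl)).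
split; first by move=> n; rewrite -retakh_countS; apply: count_trees_with.
exists f_count, g_count; split; first by move=> n; apply: count_trees_with F_treeE.
split; first by move=> n; apply: count_trees_with.
split; first exact: f_count_eq.
split; first exact: g_count_eq.
exact: f_count_motzkin.
Qed.
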